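(* Consider any instance of the large-market envy-free pricing problem described in the context with monotone hazard rate inverse demands and uniform peak $\lambda_i(0)=\lambda^{max}$, and a run of the ascending-price procedure with some stop parameter $k\ge1$. If an item $t$ belongs to the active set at two active prices $p_1<p_2$, then $c_t(y_t(p_1))\ge c_t(y_t(p_2))$, where $y_t(p)$ denotes the allocation of $t$ when the active price is $p$.
   Context: Model. Finite item set $S$, finite set $B$ of buyer types, bipartite graph $G=(B\cup S,E)$, $S_i=\{t:(i,t)\in E\}$. Buyer type $i$ has inverse demand $\lambda_i:[0,T_i]\to\mathbb{R}_{\ge0}$, non-increasing, continuously differentiable on $(0,T_i)$, with monotone hazard rate ($\lambda_i'/\lambda_i$ non-increasing), $\lambda_i(0)=\lambda^{max}$. Item $t$ has convex continuously differentiable production cost $C_t$ with derivative $c_t$. Allocations $y_t(i)\ge0$ ($>0$ only if $(i,t)\in E$), $\sum_ty_t(i)=x_i$, $y_t=\sum_iy_t(i)$. Best-response demand of type $i$ at price $q$: $\lambda_i(x_i)=q$. Min-cost flow for demand $\vec x$: feasible allocation minimizing $\sum_tC_t(y_t)$. $(\vec x^*,\vec y^* )$ a welfare maximizer (of $\sum_i\int_0^{x_i}\lambda_i-\sum_tC_t(y_t)$), $p^*_t=c_t(y^*_t)$. Ascending-price procedure with parameter $k\ge1$: start with $p_t=p^*_t$; ACTIVE = minimum-price items of $\vec p^*$ and buyer types receiving them in $\vec y^*$, rest INACTIVE, FINISH empty. Active items share an active price increased continuously; at active price $p$ active buyer types have best-response demand to $p$ and receive a min-cost flow within the subinstance induced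 by the active set; inactive entities keep their $\vec x^*,\vec y^*$ values, finished ones keep their values at finishing; $\vec y(p)$ is the resulting allocation. An inactive item $t$ (with the buyer types using it) becomes active when the active price reaches $p^*_t$. An active item $t$ (with buyer types using it) is finished and its price frozen once $p-c_t(y_t(p))\ge\frac1k(\lambda^{max}-c_t(y_t(p)))$. Ends when all are finished. *)

From HB Require Import structures.
From mathcomp Require Import all_boot all_order all_algebra.
From mathcomp Require Import all_classical all_reals all_analysis.
Set Implicit Arguments. Unset Strict Implicit. Unset Printing Implicit Defensive.
Import Order.TTheory GRing.Theory Num.Theory.
Import numFieldNormedType.Exports.
Local Open Scope classical_set_scope.
Local Open Scope ring_scope.

Section Model.
Context {R : realType} {B S : finType}.
(* B : buyer types, S : items, adj i t : (i,t) is an edge of G. *)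

Definition inv_demand_ok (lmax T : R) (lam : R -> R) : Prop :=
  0 < T /\ lam 0 = lmax /\
  (forall u, 0 <= u <= T -> 0 <= lam u) /\
  (forall u v, 0 <= u -> u <= v -> v <= T -> lam v <= lam u) /\
  (forall u, 0 < u < T ->
     derivable lam u 1 /\ ((derive1 lam) x @[x --> u] --> (derive1 lam) u)) /\
  (forall u v, 0 < u -> u <= v -> v < T -> 0 < lam v ->
     (derive1 lam) v / lam v <= (derive1 lam) u / lam u).

Definition cost_ok (C c : R -> R) : Prop :=
  (forall a b th, 0 <= a -> 0 <= b -> 0 <= th <= 1 ->
     C (th * a + (1 - th) * b) <= th * C a + (1 - th) * C b) /\
  (forall u : R, 0 < u -> is_derive u (1 : R) C (c u)) /\
  ((fun h => (C h - C 0) / h) x @[x --> 0^'+] --> c 0) /\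
  {within [set u : R | 0 <= u], continuous c}.

(* allocations y t i = y_t(i) *)
Definition load (y : S -> B -> R) (t : S) : R := \sum_i y t i.
Definition demand (y : S -> B -> R) (i : B) : R := \sum_t y t i.

Definition feasible (adj : B -> S -> bool) (T : B -> R) (y : S -> B -> R) :=
  (forall t i, 0 <= y t i) /\ (forall t i, 0 < y t i -> adj i t) /\
  (forall i, demand y i <= T i).

Definition welfare (lam : B -> R -> R) (C : S -> R -> R) (y : S -> B -> R) : R :=
  \sum_i (\int[lebesgue_measure]_(u in `[0, demand y i]) lam i u)
  - \sum_t C t (load y t).

Definition welfare_max adj T lam C (ys : S -> B -> R) :=
  feasible adj T ys /\
  forall y, feasible adj T y -> welfare lam C y <= welfare lam C ys.

Definition start_price (c : S -> R -> R) (ys : S -> B -> R) (t : S) : R :=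
  c t (load ys t).

(* ---- a run of the ascending-price procedure ----
   fin t : the active price at which item t is finished.
   y p   : the allocation when the active price is p. *)

Definition run_dom (ps fin : S -> R) (p : R) :=
  (exists t, ps t <= p) /\ (exists t, p <= fin t).

Definition item_active (ps fin : S -> R) (p : R) (t : S) := ps t <= p <= fin t.

Definition buyer_finished (fin : S -> R) (y : R -> S -> B -> R) (p : R) (i : B) :=
  exists t, fin t < p /\ 0 < y (fin t) t i.

Definition buyer_active (ys : S -> B -> R) (ps fin : S -> R)
    (y : R -> S -> B -> R) (p : R) (i : B) :=
  ~ buyer_finished fin y p i /\ exists t, 0 < ys t i /\ ps t <= p.

Definition fin_cond (lmax k : R) (ct : R -> R) (p yt : R) :=
  (lmax - ct yt) / k <= p - ct yt.

Definition ascending_run adj (T : B -> R) (lam : B -> R -> R) (lmax : R)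
    (C c : S -> R -> R) (k : R) (ys : S -> B -> R) (fin : S -> R)
    (y : R -> S -> B -> R) : Prop :=
  let ps := start_price c ys in
  let dom := run_dom ps fin in
  let actS := item_active ps fin in
  let actB := buyer_active ys ps fin y in
  (forall t, ps t <= fin t) /\
  (forall t, fin_cond lmax k (c t) (fin t) (load (y (fin t)) t)) /\
  (forall t q, ps t <= q -> q < fin t -> ~ fin_cond lmax k (c t) q (load (y q) t)) /\
  (forall p, dom p -> feasible adj T (y p)) /\
  (forall p i, dom p -> actB p i -> lam i (demand (y p) i) = p) /\
  (* min-cost flow within the active subinstance *)
  (forall p, dom p -> forall z, feasible adj T z ->
     (forall t i, ~ (actS p t /\ actB p i) -> z t i = y p t i) ->
     (forall i, actB p i -> demand z i = demand (y p) i) ->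
     \sum_t C t (load (y p) t) <= \sum_t C t (load z t)) /\
  (forall p t i, dom p -> p < ps t -> y p t i = ys t i) /\
  (forall p t i, dom p -> ~ actB p i -> ~ buyer_finished fin y p i ->
     y p t i = ys t i) /\
  (forall p q t i, dom p -> dom q -> p <= q ->
     (forall r, p < r <= q -> ~ actS r t) -> y q t i = y p t i) /\
  (forall p q t i, dom p -> dom q -> p <= q ->
     (forall r, p < r <= q -> ~ actB r i) -> y q t i = y p t i).

End Model.

From HB Require Import structures.
From mathcomp Require Import all_boot all_order all_algebra.
From mathcomp Require Import all_classical all_reals all_analysis.
From mathcomp Require Import ring lra.
Import Order.TTheory GRing.Theory Num.Theory.
Import numFieldNormedType.Exports.
Set Implicit Arguments. Unset Strict Implicit. Unset Printing Implicit Defensive.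
Local Open Scope classical_set_scope.
Local Open Scope ring_scope.

(* Between two consecutive activation or finishing prices the sets of active
   items and buyer types do not change.  Suppose the marginal cost of an item
   rises over such an interval [[p, q]], and call rising the items active
   throughout whose marginal cost rises.  Marginal costs are nondecreasing in
   the load, so rising items gain load and some buyer type [i] gains on them.
   If [i] is active on the interval, its demand drops since the price rises,
   so it loses some non-rising item [s1]; optimality of the min-cost flows at
   [p] and at [q] then gives, for a rising item [s0] that [i] gains,
   mc_q(s0) <= mc_q(s1) <= mc_p(s1) <= mc_p(s0) < mc_q(s0).  If [i] is idle
   inside the interval, it can only gain by becoming active at [q] through an
   item activated at [q].  Both remaining cases (an item activated after [p],
   used by [i] at [p] or at [q]) contradict the optimality of y*, which forces
   p*_s0 <= p*_s1 whenever y* routes [i] to [s0] and [i] can use [s1].  The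
   claim follows by chaining over the finitely many event prices. *)

Lemma ler_lim_at_right0 {R : realType} (f g : R -> R) (l1 l2 d : R) :
  f x @[x --> 0^'+] --> l1 -> g x @[x --> 0^'+] --> l2 -> 0 < d ->
  (forall e, 0 < e -> e <= d -> f e <= g e) -> l1 <= l2.
Proof.
move=> fl1 gl2 d0 fg; apply: (ler_cvg_to fl1 gl2).
near=> e; apply: fg.
  by near: e; exact: nbhs_right_gt.
by near: e; exact: nbhs_right_le.
Unshelve. all: end_near.
Qed.

Section CostFunction.
Variables (R : realType) (C c : R -> R).
Hypothesis costC : cost_ok C c.

Lemma cost_right_quotient a : 0 <= a ->
  (fun h => (C (a + h) - C a) / h) x @[x --> 0^'+] --> c a.
Proof.
have [_ [C'c [C'0 _]]] := costC.
rewrite le_eqVlt => /orP[/eqP <-|a0]; first by under eq_fun do rewrite add0r.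
have [C'ex C'a] := C'c a a0; apply: cvg_dnbhs_at_right.
suff -> : (fun h => (C (a + h) - C a) / h) =
    (fun h => h^-1 *: ((C \o shift a) (h *: 1) - C a)) by rewrite -C'a.
by apply/funext => h /=; rewrite [h%:A]mulr1 (addrC h) mulrC.
Qed.

Lemma cost_left_quotient a : 0 < a ->
  (fun h => (C a - C (a - h)) / h) x @[x --> 0^'+] --> c a.
Proof.
have [_ [C'c _]] := costC; move=> a0; have [C'ex C'a] := C'c a a0.
have quot : (fun h => h^-1 *: ((C \o shift a) (h *: 1) - C a)) x @[x --> 0^'] --> c a.
  by rewrite -C'a.
have /cvg_at_leftNP := cvg_dnbhs_at_left quot; rewrite oppr0.
suff -> : (fun h => (C a - C (a - h)) / h) =
    (fun h => h^-1 *: ((C \o shift a) (h *: 1) - C a)) \o -%R by [].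
apply/funext => h /=; rewrite [(-h)%:A]mulr1 (addrC (-h)).
by rewrite invrN scaleNr -scalerN opprB mulrC.
Qed.

Lemma cost_pinch a b e : 0 <= a -> a < b -> 0 <= e <= b - a ->
  C (a + e) + C (b - e) <= C a + C b.
Proof.
have [convC _] := costC; move=> a0 ab /andP[e0 eba].
have ba : 0 < b - a by rewrite subr_gt0.
set th := (b - a - e) / (b - a).
have th01 : 0 <= th <= 1.
  by apply/andP; split; [apply: divr_ge0 | rewrite ler_pdivrMr // mul1r]; lra.
have th01' : 0 <= 1 - th <= 1 by move: th01 => /andP[? ?]; apply/andP; split; lra.
have -> : a + e = th * a + (1 - th) * b by rewrite /th; field; lra.
have -> : b - e = (1 - th) * a + (1 - (1 - th)) * b by rewrite /th; field; lra.
have := convC a b th a0 (ltW (le_lt_trans a0 ab)) th01.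
have := convC a b (1 - th) a0 (ltW (le_lt_trans a0 ab)) th01'; lra.
Qed.

Lemma marginal_cost_nondecreasing a b : 0 <= a -> a <= b -> c a <= c b.
Proof.
move=> a0; rewrite le_eqVlt => /orP[/eqP <- //|ab].
have b0 : 0 < b by apply: le_lt_trans ab.
have ba : 0 < b - a by rewrite subr_gt0.
apply: (ler_lim_at_right0 (cost_right_quotient a0) (cost_left_quotient b0) ba).
move=> e e0 eba; rewrite ler_pM2r ?invr_gt0 //.
have := cost_pinch a0 ab (introT andP (conj (ltW e0) eba)); lra.
Qed.

End CostFunction.

Lemma marginal_le_of_transfer {R : realType} (C0 c0 C1 c1 : R -> R) L0 L1 d :
  cost_ok C0 c0 -> cost_ok C1 c1 -> 0 < L0 -> 0 <= L1 -> 0 < d ->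
  (forall e, 0 < e -> e <= d -> C0 L0 + C1 L1 <= C0 (L0 - e) + C1 (L1 + e)) ->
  c0 L0 <= c1 L1.
Proof.
move=> C0c0 C1c1 L00 L10 d0 noimprove.
apply: (ler_lim_at_right0 (cost_left_quotient C0c0 L00)
  (cost_right_quotient C1c1 L10) d0) => e e0 ed.
rewrite ler_pM2r ?invr_gt0 //; have := noimprove e e0 ed; lra.
Qed.

Lemma sumr_indicator {R : pzSemiRingType} {T : finType} (i : T) (F : T -> R) :
  \sum_j (j == i)%:R * F j = F i.
Proof.
rewrite (bigD1 i) //= eqxx mul1r big1 ?addr0 // => j /negPf ->; by rewrite mul0r.
Qed.

Lemma sum_lt_exists {R : realDomainType} {I : finType} (P : pred I) (F G : I -> R) :
  \sum_(i | P i) F i < \sum_(i | P i) G i -> exists2 i, P i & F i < G i.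
Proof.
move=> ltFG; apply/exists_inP; apply: contraLR ltFG => /exists_inPn FG.
rewrite -leNgt; apply: ler_sum => i Pi; by rewrite leNgt FG.
Qed.

Lemma count_lt_sub (T : eqType) (a b : pred T) s x :
  subpred a b -> x \in s -> b x -> ~~ a x -> (count a s < count b s)%N.
Proof.
move=> ab; elim: s => //= z s IH; rewrite in_cons => /orP[/eqP <-|xs] bx nax.
  by rewrite bx (negPf nax) add0n add1n ltnS sub_count.
have := IH xs bx nax; case az: (a z); first by rewrite (ab _ az).
by case: (b z) => /= h; rewrite ?add0n ?add1n // ltnW.
Qed.

Section Reroute.
Variables (R : realType) (B S : finType).
Implicit Types (y : S -> B -> R) (C : S -> R -> R).

Definition reroute y (i : B) (s0 s1 : S) (e : R) : S -> B -> R :=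
  fun s j => y s j + e * ((j == i)%:R * ((s == s1)%:R - (s == s0)%:R)).

Lemma load_reroute y i s0 s1 e s :
  load (reroute y i s0 s1 e) s = load y s + e * ((s == s1)%:R - (s == s0)%:R).
Proof. by rewrite /load /reroute big_split /= -mulr_sumr sumr_indicator. Qed.

Lemma demand_reroute y i s0 s1 e j :
  demand (reroute y i s0 s1 e) j = demand y j.
Proof.
rewrite /demand /reroute big_split /= -mulr_sumr -mulr_sumr sumrB.
have one s' : \sum_s (s == s')%:R = 1 :> R.
  by rewrite -[RHS](sumr_indicator s' (fun=> 1)); apply: eq_bigr => s _; rewrite mulr1.
by rewrite !one subrr !mulr0 addr0.
Qed.

Lemma reroute_id y i s0 s1 e s j :
  ~ (j = i /\ (s = s0 \/ s = s1)) -> reroute y i s0 s1 e s j = y s j.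
Proof.
move=> away; rewrite /reroute.
have [ji|ji] := eqVneq j i; last by rewrite mul0r mulr0 addr0.
have [ss0|ss0] := eqVneq s s0; first by case: away; split => //; left.
have [ss1|ss1] := eqVneq s s1; first by case: away; split => //; right.
by rewrite subrr !mulr0 addr0.
Qed.

Lemma feasible_reroute adj (T : B -> R) y i s0 s1 e :
  feasible adj T y -> s0 != s1 -> 0 <= e <= y s0 i -> adj i s1 ->
  feasible adj T (reroute y i s0 s1 e).
Proof.
move=> [y0 [yadj ydem]] ne /andP[e0 ey] adj1; split; [|split].
- move=> s j; rewrite /reroute.
  have [->|ji] := eqVneq j i; last by rewrite mul0r mulr0 addr0.
  rewrite mul1r; have [->|ss0] := eqVneq s s0; first by rewrite (negPf ne) /=; lra.
  by have := y0 s i; case: (s == s1) => /=; lra.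
- move=> s j; rewrite /reroute.
  have [->|ji] := eqVneq j i; last by rewrite mul0r mulr0 addr0; apply: yadj.
  rewrite mul1r; have [->|ss0] := eqVneq s s0.
    by rewrite (negPf ne) /= => pos; apply: yadj; lra.
  have [-> //|ss1] := eqVneq s s1.
  by rewrite subrr mulr0 addr0; apply: yadj.
- by move=> j; rewrite demand_reroute.
Qed.

Lemma cost_reroute C y i s0 s1 e : s0 != s1 ->
  \sum_s C s (load (reroute y i s0 s1 e) s) - \sum_s C s (load y s) =
  (C s0 (load y s0 - e) - C s0 (load y s0)) + (C s1 (load y s1 + e) - C s1 (load y s1)).
Proof.
move=> ne; rewrite -sumrB (bigD1 s0) //= (bigD1 s1) /=; last by rewrite eq_sym.
rewrite big1 ?addr0; last first.
  move=> s /andP[ns1 ns0].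
  by rewrite load_reroute (negPf ns1) (negPf ns0) subrr mulr0 addr0 subrr.
rewrite !load_reroute eqxx (negPf ne) eq_sym (negPf ne) eqxx.
by rewrite /= sub0r subr0 mulrN1 mulr1.
Qed.

Lemma load_ge0 y s : (forall s j, 0 <= y s j) -> 0 <= load y s.
Proof. by move=> y0; rewrite /load sumr_ge0. Qed.

Lemma marginal_le_of_reroute C (c : S -> R -> R) adj (T : B -> R) y i s0 s1 :
  (forall s, cost_ok (C s) (c s)) -> feasible adj T y -> s0 != s1 -> 0 < y s0 i ->
  (forall e, 0 < e -> e <= y s0 i ->
     \sum_s C s (load y s) <= \sum_s C s (load (reroute y i s0 s1 e) s)) ->
  c s0 (load y s0) <= c s1 (load y s1).
Proof.
move=> costC [y0 _] ne ypos noimprove.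
apply: (@marginal_le_of_transfer _ _ _ _ _ _ _ (y s0 i)) => //.
- by apply: lt_le_trans ypos _; rewrite /load (bigD1 i) //= lerDl sumr_ge0.
- exact: load_ge0.
- by move=> e e0 ed; have := noimprove e e0 ed; have := cost_reroute C y i e ne; lra.
Qed.

Lemma welfare_max_min_cost adj (T : B -> R) lam C ys z :
  welfare_max adj T lam C ys -> feasible adj T z ->
  (forall j, demand z j = demand ys j) ->
  \sum_s C s (load ys s) <= \sum_s C s (load z s).
Proof.
move=> [_ ysmax] zfeas zdem; have := ysmax z zfeas; rewrite /welfare.
under eq_bigr do rewrite zdem.
by rewrite lerD2l lerN2.
Qed.

End Reroute.

Section AscendingRun.
Variables (R : realType) (B S : finType) (adj : B -> S -> bool) (T : B -> R).
Variables (lam : B -> R -> R) (C c : S -> R -> R) (ys : S -> B -> R).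
Variables (fin : S -> R) (y : R -> S -> B -> R).

Local Notation ps := (start_price c ys).
Local Notation dom := (run_dom ps fin).
Local Notation active := (item_active ps fin).
Local Notation bactive := (buyer_active ys ps fin y).
Local Notation bfinished := (buyer_finished fin y).

Hypothesis lam_noninc :
  forall i u v, 0 <= u -> u <= v -> v <= T i -> lam i v <= lam i u.
Hypothesis costC : forall t, cost_ok (C t) (c t).
Hypothesis ys_max : welfare_max adj T lam C ys.
Hypothesis run_feasible : forall p, dom p -> feasible adj T (y p).
Hypothesis run_best_response :
  forall p i, dom p -> bactive p i -> lam i (demand (y p) i) = p.
Hypothesis run_min_cost : forall p, dom p -> forall z, feasible adj T z ->
  (forall t i, ~ (active p t /\ bactive p i) -> z t i = y p t i) ->
  (forall i, bactive p i -> demand z i = demand (y p) i) ->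
  \sum_t C t (load (y p) t) <= \sum_t C t (load z t).
Hypothesis run_unactivated : forall p t i, dom p -> p < ps t -> y p t i = ys t i.
Hypothesis run_frozen_item : forall p q t i, dom p -> dom q -> p <= q ->
  (forall r, p < r <= q -> ~ active r t) -> y q t i = y p t i.
Hypothesis run_frozen_buyer : forall p q t i, dom p -> dom q -> p <= q ->
  (forall r, p < r <= q -> ~ bactive r i) -> y q t i = y p t i.

Definition mcost (p : R) (t : S) : R := c t (load (y p) t).

Lemma dom_active p t : active p t -> dom p.
Proof. by move=> /andP[? ?]; split; exists t. Qed.

Lemma start_price_le i s0 s1 : 0 < ys s0 i -> adj i s1 -> ps s0 <= ps s1.
Proof.
have [ysfeas _] := ys_max; move=> ypos adj1.
have [-> //|ne] := eqVneq s0 s1.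
apply: (marginal_le_of_reroute costC ysfeas ne ypos) => e e0 ey.
apply: (welfare_max_min_cost ys_max); last by move=> j; rewrite demand_reroute.
by apply: feasible_reroute => //; rewrite ey ltW.
Qed.

Lemma mcost_le_of_active r j s0 s1 : active r s0 -> active r s1 ->
  bactive r j -> 0 < y r s0 j -> adj j s1 -> mcost r s0 <= mcost r s1.
Proof.
move=> act0 act1 actj ypos adj1; have dr := dom_active act0.
have [-> //|ne] := eqVneq s0 s1.
apply: (marginal_le_of_reroute costC (run_feasible dr) ne ypos) => e e0 ey.
apply: (run_min_cost dr).
- by apply: feasible_reroute (run_feasible dr) _ _ _ => //; rewrite ey ltW.
- move=> s j' off; apply: reroute_id => -[ej es]; apply: off; rewrite ej.
  by case: es => ->.
- by move=> j' _; rewrite demand_reroute.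
Qed.

Lemma active_demand_lt p q i : dom p -> dom q -> p < q ->
  bactive p i -> bactive q i -> demand (y q) i < demand (y p) i.
Proof.
move=> dp dq pq actp actq; rewrite ltNge; apply/negP => dle.
have [yp0 _] := run_feasible dp; have [_ [_ yqT]] := run_feasible dq.
have := lam_noninc (sumr_ge0 _ (fun s _ => yp0 s i)) dle (yqT i).
by rewrite (run_best_response dq actq) (run_best_response dp actp) leNgt pq.
Qed.

Lemma item_changed_active p q s i : dom p -> dom q -> p <= q ->
  y q s i != y p s i -> exists2 r, p < r <= q & active r s.
Proof.
move=> dp dq pq /eqP changed; apply: contrapT => noact; apply: changed.
by apply: run_frozen_item => // r rpq acts; apply: noact; exists r.
Qed.

Lemma buyer_changed_active p q s i : dom p -> dom q -> p <= q ->
  y q s i != y p s i -> exists2 r, p < r <= q & bactive r i.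
Proof.
move=> dp dq pq /eqP changed; apply: contrapT => noact; apply: changed.
by apply: run_frozen_buyer => // r rpq acts; apply: noact; exists r.
Qed.

Definition event_free (p q : R) : Prop := forall s,
  ((ps s <= p) || (q <= ps s)) && ((fin s <= p) || (q <= fin s)).

Definition rising (p q : R) (s : S) : bool :=
  [&& ps s <= p, q <= fin s & mcost p s < mcost q s].

Lemma buyer_finished_event_free p q r r' i : event_free p q ->
  r <= q -> p < r' -> bfinished r i -> bfinished r' i.
Proof.
move=> ef rq pr' [u [fu yu]]; exists u; split => //.
by have /andP[_ /orP[]] := ef u; lra.
Qed.

Lemma buyer_active_event_free p q r r' i : event_free p q ->
  p < r < q -> p <= r' <= q -> bactive r i -> bactive r' i.
Proof.
move=> ef /andP[pr rq] /andP[pr' r'q] [nfin [u [yu pu]]]; split.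
  by move=> fin'; apply: nfin; apply: (buyer_finished_event_free ef r'q pr).
by exists u; split => //; have /andP[/orP[psp|qps] _] := ef u; lra.
Qed.

Lemma buyer_active_midpoint p q i u : event_free p q -> p < q ->
  ~ bfinished q i -> 0 < ys u i -> ps u <= p -> bactive ((p + q) / 2) i.
Proof.
move=> ef pq nfin yu pu; split; last by exists u; split => //; lra.
move=> finmid; apply: nfin; apply: (buyer_finished_event_free ef _ pq finmid); lra.
Qed.

Lemma load_lt_rising p q s : dom q -> rising p q s -> load (y p) s < load (y q) s.
Proof.
move=> dq /and3P[_ _]; apply: contraTT; rewrite /mcost -!leNgt => le.
apply: (marginal_cost_nondecreasing (costC s)) le.
exact: load_ge0 (run_feasible dq).1.
Qed.

Lemma rising_buyer_gain p q t : dom q -> rising p q t ->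
  exists i, \sum_(s | rising p q s) y p s i < \sum_(s | rising p q s) y q s i.
Proof.
move=> dq riset.
have : \sum_(s | rising p q s) load (y p) s < \sum_(s | rising p q s) load (y q) s.
  apply: ltr_sum; last by move=> s; apply: load_lt_rising.
  by apply/hasP; exists t; rewrite ?mem_index_enum.
rewrite /load exchange_big [X in _ < X]exchange_big /=.
by move=> /sum_lt_exists[i _ gain]; exists i.
Qed.

Lemma active_buyer_no_rising_gain p q i : event_free p q -> p < q ->
  dom p -> dom q -> bactive p i -> bactive q i ->
  \sum_(s | rising p q s) y p s i < \sum_(s | rising p q s) y q s i -> False.
Proof.
move=> ef pq dp dq actp actq gainX.
have [yp0 [ypadj _]] := run_feasible dp; have [yq0 [yqadj _]] := run_feasible dq.
have [s0 /and3P[ps0 fin0 rise0] gain0] := sum_lt_exists gainX.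
have [s1 nrise1 loss1] : exists2 s1, ~~ rising p q s1 & y q s1 i < y p s1 i.
  apply: sum_lt_exists; move: (active_demand_lt dp dq pq actp actq).
  by rewrite /demand (bigID (rising p q)) [X in _ < X](bigID (rising p q)) /=; lra.
have yq0pos : 0 < y q s0 i by apply: le_lt_trans gain0.
have yp1pos : 0 < y p s1 i by apply: le_lt_trans loss1.
have [ps1|ps1] := leP (ps s1) p; last first.
  have [[_ [ysadj _]] _] := ys_max; have [_ [u [yu pu]]] := actp.
  have ys1 : 0 < ys s1 i by rewrite -(run_unactivated i dp ps1).
  by have := start_price_le ys1 (ysadj _ _ yu); lra.
have [r /andP[pr rq] /andP[_ rfin]] :=
  item_changed_active dp dq (ltW pq) (negbT (lt_eqF loss1)).
have fin1 : q <= fin s1 by have /andP[_ /orP[]] := ef s1; lra.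
have act_p s : ps s <= p -> q <= fin s -> active p s.
  by move=> ? ?; apply/andP; split; lra.
have act_q s : ps s <= p -> q <= fin s -> active q s.
  by move=> ? ?; apply/andP; split; lra.
have := mcost_le_of_active (act_q _ ps0 fin0) (act_q _ ps1 fin1) actq yq0pos
  (ypadj _ _ yp1pos).
have := mcost_le_of_active (act_p _ ps1 fin1) (act_p _ ps0 fin0) actp yp1pos
  (yqadj _ _ yq0pos).
by move: nrise1; rewrite /rising ps1 fin1 /= -leNgt; lra.
Qed.

Lemma idle_buyer_no_rising_gain p q i s0 : event_free p q -> p < q ->
  dom p -> dom q -> (forall r, p < r < q -> ~ bactive r i) ->
  ps s0 <= p -> y p s0 i < y q s0 i -> False.
Proof.
move=> ef pq dp dq idle ps0 gain0.
have mid : p < (p + q) / 2 < q by apply/andP; split; lra.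
have [actq|nactq] := pselect (bactive q i); last first.
  have [r /andP[pr]] := buyer_changed_active dp dq (ltW pq) (negbT (gt_eqF gain0)).
  rewrite le_eqVlt => /orP[/eqP-> //|rq] actr.
  by apply: (idle r) => //; apply/andP.
have [nfinq [u [yu pu]]] := actq.
have [yp0 _] := run_feasible dp; have [_ [yqadj _]] := run_feasible dq.
have := start_price_le yu (yqadj _ _ (le_lt_trans (yp0 s0 i) gain0)).
have [up|] := leP (ps u) p; last by lra.
by case: (idle _ mid); apply: buyer_active_midpoint nfinq yu up.
Qed.

Lemma mcost_noninc_event_free p q t : event_free p q ->
  active p t -> active q t -> p < q -> mcost q t <= mcost p t.
Proof.
move=> ef actp actq pq; have dp := dom_active actp; have dq := dom_active actq.
rewrite leNgt; apply/negP => rise.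
have riset : rising p q t.
  by move: actp actq => /andP[? _] /andP[_ ?]; apply/and3P.
have [i gainX] := rising_buyer_gain dq riset.
have [[r rpq actr]|idle] := pselect (exists2 r, p < r < q & bactive r i).
  have act r' : p <= r' <= q -> bactive r' i.
    by move=> r'pq; apply: buyer_active_event_free ef rpq r'pq actr.
  have [pp qq] : p <= p <= q /\ p <= q <= q by rewrite !lexx (ltW pq).
  exact: active_buyer_no_rising_gain ef pq dp dq (act p pp) (act q qq) gainX.
have [s0 /and3P[ps0 _ _] gain0] := sum_lt_exists gainX.
apply: (idle_buyer_no_rising_gain ef pq dp dq _ ps0 gain0) => r rpq actr.
by apply: idle; exists r.
Qed.

Definition events : seq R := [seq ps s | s <- enum S] ++ [seq fin s | s <- enum S].

Lemma event_freeP p q : ~~ has (fun e => p < e < q) events -> event_free p q.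
Proof.
move=> /hasPn none s.
have psE : ps s \in events by rewrite mem_cat map_f ?mem_enum.
have finE : fin s \in events by rewrite mem_cat orbC map_f ?mem_enum.
by move: (none _ psE) (none _ finE); rewrite !negb_and -!leNgt => -> ->.
Qed.

Lemma mcost_noninc p q t : active p t -> active q t -> p < q ->
  mcost q t <= mcost p t.
Proof.
have [n] := ubnP (count (fun e => p < e < q) events).
elim: n => // n IH in p q *; rewrite ltnS => cnt actp actq pq.
have [/hasP[e ev /andP[pe eq]]|none] := boolP (has (fun e => p < e < q) events).
  have acte : active e t.
    by move: actp actq => /andP[? _] /andP[_ ?]; apply/andP; split; lra.
  have fewer a b : p <= a -> b <= q -> (a == e) || (b == e) ->
      (count (fun x => (a < x < b)%R) events < n)%N.
    move=> pa bq ab; apply: leq_trans cnt; apply: count_lt_sub ev _ _.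
    - by move=> x /andP[ax xb]; apply/andP; split; lra.
    - by apply/andP; split; lra.
    - by case/orP: ab => /eqP->; rewrite ltxx ?andbF.
  apply: le_trans (IH e q _ acte actq eq) (IH p e _ actp acte pe).
    by apply: fewer; rewrite ?eqxx //; lra.
  by apply: fewer; rewrite ?eqxx ?orbT //; lra.
exact: mcost_noninc_event_free (event_freeP none) actp actq pq.
Qed.

End AscendingRun.

Theorem lemma2 (R : realType) (B S : finType) (adj : B -> S -> bool)
    (T : B -> R) (lam : B -> R -> R) (lmax : R) (C c : S -> R -> R) (k : R)
    (ys : S -> B -> R) (fin : S -> R) (y : R -> S -> B -> R) :
  (forall i, inv_demand_ok lmax (T i) (lam i)) ->
  (forall t, cost_ok (C t) (c t)) ->
  welfare_max adj T lam C ys ->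
  1 <= k ->
  ascending_run adj T lam lmax C c k ys fin y ->
  forall (t : S) (p1 p2 : R),
    item_active (start_price c ys) fin p1 t ->
    item_active (start_price c ys) fin p2 t ->
    p1 < p2 ->
    c t (load (y p2) t) <= c t (load (y p1) t).
Proof.
move=> lamok costC ysmax _.
move=> [_ [_ [_ [feas [best [mincost [unact [_ [frozen_t frozen_i]]]]]]]]].
have lam_noninc i := (lamok i).2.2.2.1.
have mono := mcost_noninc lam_noninc costC ysmax feas best mincost unact frozen_t frozen_i.
by move=> t p1 p2 act1 act2 lt12; apply: mono act1 act2 lt12.
Qed.
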